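(* Let $n\ge1$ and let $\mathrm{adj}\colon K\dashv N$ be the adjunction between $\mathrm{s}^n\mathcal S$ and $\mathbf{Rel}^n\mathbf{Cat}$. (i) For every $X\in\mathrm{s}^n\mathcal S$, the $n$-relative category $KX$ is completely determined by the $2$-skeleton $\mathrm{sk}_2X$ of $X$; that is, the inclusion $\mathrm{sk}_2X\to X$ induces an isomorphism $K(\mathrm{sk}_2X)\to KX$. (ii) For every $\mathcal C\in\mathbf{Rel}^n\mathbf{Cat}$, $N\mathcal C$ is completely determined by its $2$-skeleton and is its own $2$-coskeleton: for every $Y\in\mathrm{s}^n\mathcal S$, restriction gives a bijection between maps $Y\to N\mathcal C$ and maps $\mathrm{sk}_2Y\to\mathrm{sk}_2N\mathcal C$.
   Context: An $n$-relative category $\mathcal C=(a\mathcal C,v_1\mathcal C,\dots,v_n\mathcal C,w\mathcal C)$ consists of a category $a\mathcal C$ and subcategories $v_1\mathcal C,\dots,v_n\mathcal C,w\mathcal C\subset a\mathcal C$, each containing all objects, with $w\mathcal C\subset v_i\mathcal C$, such that every map of $a\mathcal C$ is a finite composite of maps in the $v_i\mathcal C$, and every relation in $a\mathcal C$ follows from commutativity of squares $y_2x_1=x_2y_1$ with $x_1,x_2\in v_i\mathcal C$, $y_1,y_2\in v_j\mathcal C$. $\mathbf{Rel}^n\mathbf{Cat}$ is the category of small $n$-relative categories and functors of ambient categories preserving $w$ and each $v_i$. For $p\ge0$, $\mathbf p$ is the poset $0\to\cdots\to p$ and $|\mathbf p|$ its discrete subcategory; $\mathbf p_n^{v_n}\times\cdots\times\mathbf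 p_1^{v_1}\times\mathbf q^w$ is the $n$-relative category with ambient category $\mathbf p_n\times\cdots\times\mathbf p_1\times\mathbf q$, $w=|\mathbf p_n|\times\cdots\times|\mathbf p_1|\times\mathbf q$, $v_i=|\mathbf p_n|\times\cdots\times\mathbf p_i\times\cdots\times|\mathbf p_1|\times\mathbf q$. $\mathrm{s}^n\mathcal S$ is the category of $(n+1)$-simplicial sets with multisimplices indexed by $(p_n,\dots,p_1,q)$; $\Delta[p_n,\dots,p_1,q]$ is the standard (representable) multisimplex. $N\mathcal C$ has as $(p_n,\dots,p_1,q)$-simplices the relative functors $\mathbf p_n^{v_n}\times\cdots\times\mathbf p_1^{v_1}\times\mathbf q^w\to\mathcal C$, and $K$ is its left adjoint, the colimit-preserving functor with $K\Delta[p_n,\dots,p_1,q]=\mathbf p_n^{v_n}\times\cdots\times\mathbf p_1^{v_1}\times\mathbf q^w$. A multisimplex of degree $(p_n,\dots,p_1,q)$ has total dimension $p_n+\cdots+p_1+q$; the $2$-skeleton $\mathrm{sk}_2X$ of $X$ is the smallest subobject of $X$ containing all multisimplices of total dimension $\le2$. *)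

From mathcomp Require Import all_boot.
Set Implicit Arguments. Unset Strict Implicit. Unset Printing Implicit Defensive.

Section Defs.
Variable n : nat.

(* comp g f is g o f; it is only meaningful when cod f = dom g.         *)
(* rv i is the subcategory v_{i+1}, rw is w.                           *)
Record prerelcat := PreRelCat {
  ob : Type; mor : Type;
  dom : mor -> ob; cod : mor -> ob;
  idm : ob -> mor;
  comp : mor -> mor -> mor;
  rv : 'I_n -> mor -> Prop;
  rw : mor -> Prop }.

Definition is_cat (C : prerelcat) : Prop :=
  (forall a : ob C, dom (idm a) = a /\ cod (idm a) = a) /\
  (forall f g : mor C, cod f = dom g ->
      dom (comp g f) = dom f /\ cod (comp g f) = cod g) /\
  (forall f : mor C, comp f (idm (dom f)) = f /\ comp (idm (cod f)) f = f) /\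
  (forall f g h : mor C, cod f = dom g -> cod g = dom h ->
      comp h (comp g f) = comp (comp h g) f).

Definition is_subcat (C : prerelcat) (P : mor C -> Prop) : Prop :=
  (forall a : ob C, P (idm a)) /\
  (forall f g : mor C, cod f = dom g -> P f -> P g -> P (comp g f)).

Fixpoint chain (C : prerelcat) (a : ob C) (s : seq ('I_n * mor C)) : Prop :=
  match s with
  | [::] => True
  | (i, f) :: s' => dom f = a /\ rv i f /\ chain (cod f) s'
  end.

Fixpoint pend (C : prerelcat) (a : ob C) (s : seq ('I_n * mor C)) : ob C :=
  match s with [::] => a | (_, f) :: s' => pend (cod f) s' end.

Fixpoint peval (C : prerelcat) (a : ob C) (s : seq ('I_n * mor C)) : mor C :=
  match s with [::] => idm a | (_, f) :: s' => comp (peval (cod f) s') f end.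

(* elementary relations: commutative squares y2 x1 = x2 y1 with
   x1, x2 in v_i and y1, y2 in v_j, and identities of the v_i *)
Definition sq_step (C : prerelcat) (P Q : ob C * seq ('I_n * mor C)) : Prop :=
  P.1 = Q.1 /\ chain P.1 P.2 /\ chain Q.1 Q.2 /\
  ((exists s1 s2 (i j : 'I_n) (x1 x2 y1 y2 : mor C),
       P.2 = s1 ++ [:: (i, x1); (j, y2)] ++ s2 /\
       Q.2 = s1 ++ [:: (j, y1); (i, x2)] ++ s2 /\
       dom x1 = dom y1 /\ cod y2 = cod x2 /\ comp y2 x1 = comp x2 y1)
   \/ (exists s1 s2 (i : 'I_n) (b : ob C),
       P.2 = s1 ++ (i, idm b) :: s2 /\ Q.2 = s1 ++ s2)).

Inductive eqclos (T : Type) (R : T -> T -> Prop) : T -> T -> Prop :=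
  | ec_step x y : R x y -> eqclos R x y
  | ec_refl x : eqclos R x x
  | ec_sym x y : eqclos R x y -> eqclos R y x
  | ec_trans x y z : eqclos R x y -> eqclos R y z -> eqclos R x z.

Definition is_relcat (C : prerelcat) : Prop :=
  is_cat C /\
  (forall i, is_subcat (fun f : mor C => rv i f)) /\ is_subcat (fun f : mor C => rw f) /\
  (forall i (f : mor C), rw f -> rv i f) /\
  (* every map is a finite composite of maps in the v_i *)
  (forall f : mor C, exists s, chain (dom f) s /\ pend (dom f) s = cod f /\
                               peval (dom f) s = f) /\
  (* every relation follows from commutative squares *)
  (forall (a : ob C) s t, chain a s -> chain a t -> pend a s = pend a t ->
      peval a s = peval a t -> eqclos (@sq_step C) (a, s) (a, t)).

Record rfun (C D : prerelcat) := RFun {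
  fo : ob C -> ob D;
  fm : mor C -> mor D;
  fm_dom : forall f, dom (fm f) = fo (dom f);
  fm_cod : forall f, cod (fm f) = fo (cod f);
  fm_id : forall a, fm (idm a) = idm (fo a);
  fm_comp : forall f g, cod f = dom g -> fm (comp g f) = comp (fm g) (fm f);
  fm_v : forall i f, rv i f -> rv i (fm f);
  fm_w : forall f, rw f -> rw (fm f) }.

Definition rfeq (C D : prerelcat) (F G : rfun C D) : Prop :=
  (forall a, fo F a = fo G a) /\ (forall f, fm F f = fm G f).

Program Definition rcomp (C D E : prerelcat) (F : rfun D E) (G : rfun C D)
  : rfun C E := @RFun C E (fun a => fo F (fo G a)) (fun f => fm F (fm G f))
    _ _ _ _ _ _.
Next Obligation. by move=> *; rewrite /= !fm_dom. Qed.
Next Obligation. by move=> *; rewrite /= !fm_cod. Qed.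
Next Obligation. by move=> *; rewrite /= !fm_id. Qed.
Next Obligation.
by move=> C D E F G f g H /=; rewrite !fm_comp // fm_cod fm_dom H.
Qed.
Next Obligation. by move=> *; apply: fm_v; apply: fm_v. Qed.
Next Obligation. by move=> *; apply: fm_w; apply: fm_w. Qed.

Program Definition rid (C : prerelcat) : rfun C C :=
  @RFun C C id id _ _ _ _ _ _.
Solve All Obligations with done.

Definition is_iso (C D : prerelcat) (F : rfun C D) : Prop :=
  exists G : rfun D C, rfeq (rcomp G F) (rid C) /\ rfeq (rcomp F G) (rid D).

(* Multi-indices (q, p_1, ..., p_n): coordinate 0 is q (the w-direction), *)
(* coordinate i+1 (= lift ord0 i) is p_{i+1} (the v_{i+1}-direction).   *)
Definition idx := 'I_n.+1 -> nat.
Definition tdim (p : idx) : nat := \sum_(k < n.+1) p k.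

(* maps [q] -> [p] of Delta^{n+1}: coordinatewise monotone maps *)
Unset Implicit Arguments.
Record mmono (q p : idx) := MMono {
  mm : forall k, 'I_(q k).+1 -> 'I_(p k).+1;
  mm_homo : forall k (x y : 'I_(q k).+1), x <= y -> mm k x <= mm k y }.
Arguments mm {q p}.
Arguments mm_homo {q p}.
Arguments MMono {q p}.
Set Implicit Arguments.

Definition mm_id (p : idx) : mmono p p := MMono (fun k x => x) (fun k x y h => h).
Program Definition mm_comp (r q p : idx) (f : mmono q p) (g : mmono r q)
  : mmono r p := MMono (fun k x => mm f k (mm g k x)) _.
Next Obligation. by move=> r q p f g k x y h; do 2 apply: mm_homo. Qed.

(* (n+1)-simplicial sets: presheaves on Delta^{n+1}; laws separately *)
Record pmss := PMSS {
  elt :> idx -> Type;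
  act : forall (p q : idx), mmono q p -> elt p -> elt q }.

Definition is_mss (X : pmss) : Prop :=
  (forall p (x : X p), act (mm_id p) x = x) /\
  (forall p q r (f : mmono q p) (g : mmono r q) (x : X p),
      act (mm_comp f g) x = act g (act f x)).

Definition spred (X : pmss) := forall p, X p -> Prop.
Definition allp (X : pmss) : spred X := fun _ _ => True.
Definition sk2 (X : pmss) : spred X := fun p x =>
  exists (q : idx) (f : mmono p q) (y : X q), tdim q <= 2 /\ x = act f y.
Arguments allp X : clear implicits.
Arguments sk2 X : clear implicits.

Record smap (X : pmss) (S : spred X) (Z : pmss) (T : spred Z) := SMap {
  sfun : forall p (x : X p), S p x -> Z p;
  sfun_in : forall p (x : X p) (hx : S p x), T p (sfun hx);
  sfun_nat : forall p q (f : mmono q p) (x : X p) (hx : S p x)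
      (hx' : S q (act f x)), sfun hx' = act f (sfun hx) }.

Program Definition restr (X Z : pmss) (g : smap (allp X) (allp Z))
  : smap (sk2 X) (sk2 Z) :=
  @SMap X (sk2 X) Z (sk2 Z) (fun p x _ => sfun g (I : allp X _ x)) _ _.
Next Obligation.
move=> X Z g p x [q [f [y [hq e]]]]; subst x => /=.
exists q, f, (sfun g (I : allp X _ y)); split=> //.
exact: (@sfun_nat _ _ _ _ g q p f y I I).
Qed.
Next Obligation. by move=> X Z g p q f x hx hx' /=; exact: (@sfun_nat _ _ _ _ g p q f x I I). Qed.

Program Definition restr_dom (X Z : pmss) (T : spred Z) (g : smap (allp X) T)
  : smap (sk2 X) T :=
  @SMap X (sk2 X) Z T (fun p x _ => sfun g (I : allp X _ x)) _ _.
Next Obligation. by move=> X Z T g p x hx; exact: sfun_in. Qed.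
Next Obligation. by move=> X Z T g p q f x hx hx' /=; exact: (@sfun_nat _ _ _ _ g p q f x I I). Qed.

(* the grid  p_n^{v_n} x ... x p_1^{v_1} x q^w                          *)
Section Grid.
Variable p : idx.
Definition gob := forall k : 'I_n.+1, 'I_(p k).+1.
Definition gle (a b : gob) : bool := [forall k, a k <= b k].
Definition gmor := {ab : gob * gob | gle ab.1 ab.2}.
Definition gdom (m : gmor) : gob := (sval m).1.
Definition gcod (m : gmor) : gob := (sval m).2.
Lemma gle_refl a : gle a a. Proof. by apply/forallP. Qed.
Definition gid (a : gob) : gmor := exist _ (a, a) (gle_refl a).
Definition gcomp (g f : gmor) : gmor := insubd f (gdom f, gcod g).
Definition gv (i : 'I_n) (m : gmor) : Prop :=
  forall k, k != ord0 -> k != lift ord0 i -> (gdom m k : nat) = gcod m k.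
Definition gw (m : gmor) : Prop :=
  forall k, k != ord0 -> (gdom m k : nat) = gcod m k.
Definition grid : prerelcat := @PreRelCat gob gmor gdom gcod gid gcomp gv gw.

Lemma gm_eq (m1 m2 : gmor) : sval m1 = sval m2 -> m1 = m2.
Proof.
case: m1 m2 => x hx [y hy] /= e; subst y.
by rewrite (bool_irrelevance hx hy).
Qed.

Lemma gcomp_val (f g : gmor) : gcod f = gdom g ->
  sval (gcomp g f) = (gdom f, gcod g).
Proof.
move=> e; rewrite /gcomp insubdK //.
move: e; case: f => [[a b] hab]; case: g => [[c d] hcd].
rewrite /gcod /gdom /= => e; subst c.
apply/forallP => k; move/forallP: hab => /(_ k) hab.
move/forallP: hcd => /(_ k) hcd; exact: leq_trans hab hcd.
Qed.
End Grid.

Section GridFun.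
Variables (q p : idx) (f : mmono q p).
Definition gfo (a : gob q) : gob p := fun k => mm f k (a k).
Lemma gfo_le (a b : gob q) : gle a b -> gle (gfo a) (gfo b).
Proof. by move=> /forallP h; apply/forallP => k; apply: mm_homo. Qed.
Definition gfm (m : gmor q) : gmor p :=
  exist _ (gfo (gdom m), gfo (gcod m)) (gfo_le (svalP m)).

Program Definition gridfun : rfun (grid q) (grid p) :=
  @RFun (grid q) (grid p) gfo gfm _ _ _ _ _ _.
Next Obligation. by []. Qed.
Next Obligation. by []. Qed.
Next Obligation. by move=> a; apply: gm_eq. Qed.
Next Obligation.
move=> f1 g1 H; apply: gm_eq.
have H' : gcod (gfm f1) = gdom (gfm g1) by rewrite /gcod /gdom /=; congr gfo; exact: H.
change (sval (gfm (gcomp g1 f1)) = sval (gcomp (gfm g1) (gfm f1))).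
rewrite (gcomp_val H') /= /gdom /gcod (gcomp_val H) //.
Qed.
Next Obligation.
move=> i m H k hk hk'; rewrite /gfo /=; congr (nat_of_ord (mm f k _)).
by apply: val_inj; apply: H.
Qed.
Next Obligation.
move=> m H k hk; rewrite /gfo /=; congr (nat_of_ord (mm f k _)).
by apply: val_inj; apply: H.
Qed.
End GridFun.

Definition nerve (C : prerelcat) : pmss :=
  @PMSS (fun p => rfun (grid p) C)
        (fun p q f F => rcomp F (gridfun f)).

(* universal arrows: (D, eta : S -> N D) is a value of the left adjoint K
   at the subobject S of X (S = all of X, or S = sk_2 X) *)
Definition factors (X : pmss) (S : spred X) (D C : prerelcat)
  (phi : rfun D C) (eta : smap S (allp (nerve D)))
  (g : smap S (allp (nerve C))) : Prop :=
  forall p (x : X p) (hx : S p x), rfeq (rcomp phi (sfun eta hx)) (sfun g hx).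

Definition universal (X : pmss) (S : spred X) (D : prerelcat)
  (eta : smap S (allp (nerve D))) : Prop :=
  forall C : prerelcat, is_relcat C -> forall g : smap S (allp (nerve C)),
    (exists phi : rfun D C, factors phi eta g) /\
    (forall phi1 phi2 : rfun D C, factors phi1 eta g -> factors phi2 eta g ->
       rfeq phi1 phi2).

End Defs.

Arguments allp {n} X.
Arguments sk2 {n} X.

(* A relative functor from a grid  p_n^{v_n} x ... x p_1^{v_1} x q^w  to an
   n-relative category is determined by its values on vertices and on the maps
   that move a single coordinate, since every map of the grid factors as a
   "staircase" of such moves, taken in increasing order of coordinates; these
   are simplices of total dimension 0 and 1.  Conversely, data prescribed
   compatibly on all simplices of total dimension at most 2 glue to a relative
   functor on the grid: two moves in the same coordinate compose as dictated by
   a 2-simplex in that direction, and moves in two different coordinates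
   commute by a (1+1)-dimensional square, which is what makes staircases
   compose.  Hence every map  sk_2 Y -> N C  extends uniquely to  Y -> N C,
   which is (ii); it also shows that maps  X -> N C  and  sk_2 X -> N C
   correspond, so that  K X  and  K (sk_2 X)  have the same universal
   property, which is (i). *)

From Pilot Require Import Defs.
From mathcomp Require Import all_boot.
From Stdlib Require Import FunctionalExtensionality ProofIrrelevance.
Set Implicit Arguments. Unset Strict Implicit. Unset Printing Implicit Defensive.

Arguments mm {n q p}.
Arguments MMono {n q p}.
Arguments mm_homo {n q p}.

Section Skeleton.
Variable n : nat.
Local Notation N := n.+1.
Local Notation idx := (idx n).
Implicit Types (p q r : idx).

Lemma mmono_ext q p (f g : mmono n q p) :
  (forall k x, mm f k x = mm g k x) -> f = g.
Proof.
case: f g => f hf [g hg] /= e.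
have E : f = g.
  by apply: functional_extensionality_dep => k; apply: functional_extensionality.
by subst g; congr MMono; apply: proof_irrelevance.
Qed.

Lemma rfeq_eq (C D : prerelcat n) (F G : rfun C D) : rfeq F G -> F = G.
Proof.
case: F G => fo1 fm1 ? ? ? ? ? ? [fo2 fm2 ? ? ? ? ? ?] [/= eo em].
have E1 : fo1 = fo2 by apply: functional_extensionality.
have E2 : fm1 = fm2 by apply: functional_extensionality.
by subst; f_equal; apply: proof_irrelevance.
Qed.

Lemma smap_ext (X : pmss n) (S : spred X) (Z : pmss n) (T : spred Z)
  (g1 g2 : smap S T) :
  (forall p x (hx : S p x), sfun g1 hx = sfun g2 hx) -> g1 = g2.
Proof.
case: g1 g2 => s1 ? ? [s2 ? ?] /= e.
have E : s1 = s2.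
  apply: functional_extensionality_dep => p; apply: functional_extensionality_dep => x.
  by apply: functional_extensionality_dep.
by subst; f_equal; apply: proof_irrelevance.
Qed.

Lemma rfeq_sym (C D : prerelcat n) (F G : rfun C D) : rfeq F G -> rfeq G F.
Proof. by case=> h1 h2; split=> x; [rewrite h1|rewrite h2]. Qed.

Lemma rfeq_trans (C D : prerelcat n) (F G H : rfun C D) :
  rfeq F G -> rfeq G H -> rfeq F H.
Proof. by case=> h1 h2 [h3 h4]; split=> x; [rewrite h1 h3|rewrite h2 h4]. Qed.

Lemma rfeq_compl (C D E : prerelcat n) (F : rfun D E) (G H : rfun C D) :
  rfeq G H -> rfeq (rcomp F G) (rcomp F H).
Proof. by case=> h1 h2; split=> x /=; rewrite ?h1 ?h2. Qed.

Lemma rcomp_gridfun r q p (f : mmono n q p) (k : mmono n r q) :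
  rcomp (gridfun f) (gridfun k) = gridfun (mm_comp f k).
Proof. by apply: rfeq_eq; split=> // m; apply: gm_eq. Qed.

(** * Grids *)

Lemma gob_ext p (u v : gob p) : (forall l, (u l : nat) = v l) -> u = v.
Proof.
by move=> e; apply: functional_extensionality_dep => l; apply: val_inj; exact: e.
Qed.

Lemma gleP p (a b : gob p) : reflect (forall k, a k <= b k) (gle a b).
Proof. exact: forallP. Qed.

Lemma gle_trans p (a b c : gob p) : gle a b -> gle b c -> gle a c.
Proof.
by move=> /gleP h1 /gleP h2; apply/gleP => k; apply: leq_trans (h1 k) (h2 k).
Qed.

Definition gbot q : gob q := fun _ => ord0.
Definition gtop q : gob q := fun _ => ord_max.

Lemma gle_bot_top q : gle (gbot q) (gtop q).
Proof. by apply/gleP. Qed.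

Definition gfull q : gmor q := exist _ (gbot q, gtop q) (gle_bot_top q).

(* the map [u -> v]; it is a junk identity unless [gle u v] *)
Definition garr p (u v : gob p) : gmor p := insubd (gid u) (u, v).

Lemma garr_val p (u v : gob p) : gle u v -> sval (garr u v) = (u, v).
Proof. by move=> h; rewrite /garr insubdK. Qed.

Lemma gdom_garr p (u v : gob p) : gle u v -> gdom (garr u v) = u.
Proof. by move=> h; rewrite /gdom garr_val. Qed.

Lemma gcod_garr p (u v : gob p) : gle u v -> gcod (garr u v) = v.
Proof. by move=> h; rewrite /gcod garr_val. Qed.

Lemma garrE p (m : gmor p) : m = garr (gdom m) (gcod m).
Proof. by apply: gm_eq; case: m => [[a b] h]; rewrite garr_val. Qed.

Lemma garr_id p (a : gob p) : garr a a = gid a.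
Proof. by apply: gm_eq; rewrite garr_val ?gle_refl. Qed.

Lemma fm_garr_comp r (D : prerelcat n) (F : rfun (grid r) D) (a b c : gob r) :
  gle a b -> gle b c -> fm F (garr a c) = Defs.comp (fm F (garr b c)) (fm F (garr a b)).
Proof.
move=> hab hbc; have hcod : gcod (garr a b) = gdom (garr b c).
  by rewrite gcod_garr ?gdom_garr.
rewrite -fm_comp //; congr (fm F _); apply: gm_eq.
by rewrite gcomp_val // gdom_garr ?gcod_garr ?garr_val //; apply: gle_trans hbc.
Qed.

Definition ginterp p (a b : gob p) (j : nat) : gob p :=
  fun l => if l < j then b l else a l.

Definition gstep p (j : nat) (u v : gob p) : Prop :=
  gle u v /\ forall l : 'I_N, (l : nat) != j -> u l = v l.

Lemma ginterp0 p (a b : gob p) : ginterp a b 0 = a.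
Proof. by apply: functional_extensionality_dep. Qed.

Lemma ginterpN p (a b : gob p) : ginterp a b N = b.
Proof. by apply: functional_extensionality_dep => l; rewrite /ginterp ltn_ord. Qed.

Lemma ginterp_id p (a : gob p) j : ginterp a a j = a.
Proof. by apply: functional_extensionality_dep => l; rewrite /ginterp; case: ifP. Qed.

Lemma gle_ginterpl p (a b : gob p) j : gle a b -> gle a (ginterp a b j).
Proof. by move/gleP=> h; apply/gleP => l; rewrite /ginterp; case: ifP. Qed.

Lemma gle_ginterpr p (a b : gob p) j : gle a b -> gle (ginterp a b j) b.
Proof. by move/gleP=> h; apply/gleP => l; rewrite /ginterp; case: ifP. Qed.

Lemma ginterp_step p (a b : gob p) j :
  gle a b -> gstep j (ginterp a b j) (ginterp a b j.+1).
Proof.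
move/gleP=> h; split.
  apply/gleP => l; rewrite /ginterp; case: ifP => hl; first by rewrite ltnS (ltnW hl).
  by case: ifP.
move=> l hl; have e : (l < j.+1) = (l < j) by rewrite ltnS leq_eqVlt (negbTE hl).
by rewrite /ginterp e.
Qed.

Lemma gfo_ginterp q p (f : mmono n q p) (a b : gob q) j :
  gfo f (ginterp a b j) = ginterp (gfo f a) (gfo f b) j.
Proof. by apply: functional_extensionality_dep => l; rewrite /gfo /ginterp; case: ifP. Qed.

(* the point, the edge in direction [j], and the grid spanned by directions
   [j] and [k] (a 2-simplex in direction [j] when [j = k]) *)
Definition idx0 : idx := fun _ => 0.
Definition idx1 (j : nat) : idx := fun l => ((l : nat) == j : nat).
Definition idx2 (j k : nat) : idx := fun l => ((l : nat) == j : nat) + ((l : nat) == k : nat).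

Lemma sum_eqn_le1 j : \sum_(l < N) ((l : nat) == j : nat) <= 1.
Proof.
rewrite (eq_bigr (fun l : 'I_N => if (l : nat) == j then 1 else 0)); last by move=> l _; case: eqP.
by rewrite -big_mkcond (big_ord1_eq _ (fun _ => 1)); case: ifP.
Qed.

Lemma tdim_idx0 : tdim idx0 <= 1.
Proof. by rewrite /tdim big1. Qed.

Lemma tdim_idx1 j : tdim (idx1 j) <= 1.
Proof. exact: sum_eqn_le1. Qed.

Lemma tdim_idx2 j k : tdim (idx2 j k) <= 2.
Proof. by rewrite /tdim /idx2 big_split; apply: (leq_add (sum_eqn_le1 j) (sum_eqn_le1 k)). Qed.

(* the vertex of the grid with coordinates [c], clipped to the grid *)
Definition gpoint q (c : 'I_N -> nat) : gob q := fun l => inord (c l).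

Lemma gpoint_val q c l : c l <= q l -> (gpoint q c l : nat) = c l.
Proof. by move=> h; rewrite /gpoint inordK // ltnS. Qed.

(* [mm_seg q u v] collapses the grid of [q] onto the segment [u -> v]: the
   bottom of each coordinate goes to [u], everything else to [max u v] *)
Definition seg_fun p (u v : gob p) k (x : nat) : 'I_(p k).+1 :=
  if x == 0 then u k else if u k <= v k then v k else u k.

Lemma seg_fun_homo p (u v : gob p) k (x y : nat) :
  x <= y -> seg_fun u v k x <= seg_fun u v k y.
Proof.
rewrite /seg_fun; case: eqP => [_|/eqP x0] hxy.
  by case: eqP => // _; case: ifP => // ->.
by rewrite ifN_eq // -lt0n (leq_trans _ hxy) // lt0n.
Qed.

Definition mm_seg q p (u v : gob p) : mmono n q p :=
  MMono (fun k (x : 'I_(q k).+1) => seg_fun u v k x) (fun k x y h => seg_fun_homo u v k h).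

Lemma gfo_seg_bot q p (u v : gob p) : gfo (mm_seg q u v) (gbot q) = u.
Proof. by apply: gob_ext. Qed.

Lemma gfo_seg_top p j (u v : gob p) : gstep j u v -> gfo (mm_seg (idx1 j) u v) (gtop _) = v.
Proof.
case=> /gleP huv hne; apply: gob_ext => l; rewrite /gfo /= /seg_fun /idx1 /=.
by case: (eqVneq (l : nat) j) => [_|/hne ->] /=; rewrite ?huv // if_same.
Qed.

Lemma mm_comp_seg r q p (f : mmono n q p) (u v : gob q) : gle u v ->
  mm_comp f (mm_seg r u v) = mm_seg r (gfo f u) (gfo f v).
Proof.
move/gleP=> huv; apply: mmono_ext => k x /=; rewrite /seg_fun /gfo.
by case: eqP => // _; rewrite huv (mm_homo f k _ _ (huv k)).
Qed.

Lemma garr_step_seg p j (u v : gob p) :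
  gstep j u v -> garr u v = gfm (mm_seg (idx1 j) u v) (gfull _).
Proof.
by move=> st; apply: gm_eq; rewrite garr_val ?st.1 //= gfo_seg_bot gfo_seg_top.
Qed.

Lemma ginterp_gstep p k (x x' c : gob p) i : gstep k x x' -> i <= k ->
  gstep k (ginterp x c i) (ginterp x' c i).
Proof.
case=> /gleP hxx hne hi; split; first by apply/gleP => l; rewrite /ginterp; case: ifP.
by move=> l hl; rewrite /ginterp; case: ifP => // _; apply: hne.
Qed.

Lemma ginterp_gstep_eq p k (x x' c : gob p) j : gstep k x x' -> k < j ->
  ginterp x' c j = ginterp x c j.
Proof.
case=> _ hne hkj; apply: gob_ext => l; rewrite /ginterp; case: ifP => // hl.
by rewrite hne //; apply/eqP => e; move: hl; rewrite e hkj.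
Qed.

Lemma ginterpS_eq p (a b : gob p) j :
  (forall l : 'I_N, (l : nat) = j -> (a l : nat) = b l) -> ginterp a b j.+1 = ginterp a b j.
Proof.
move=> h; apply: gob_ext => l; rewrite /ginterp ltnS leq_eqVlt.
by case: eqVneq => [e|_] //=; rewrite e ltnn h.
Qed.

Lemma gstep_gpoint q j (c c' : 'I_N -> nat) :
  (forall l, c l <= c' l) -> (forall l, c' l <= q l) ->
  (forall l : 'I_N, (l : nat) != j -> c l = c' l) -> gstep j (gpoint q c) (gpoint q c').
Proof.
move=> hcc hc' hne; split; last by move=> l hl; rewrite /gpoint hne.
by apply/gleP => l; rewrite !gpoint_val // (leq_trans (hcc l)).
Qed.

Lemma gstep_trans p j (a b c : gob p) : gstep j a b -> gstep j b c -> gstep j a c.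
Proof.
case=> hab eab [hbc ebc]; split; first exact: gle_trans hbc.
by move=> l hl; rewrite eab ?ebc.
Qed.

(* the vertex [x e_j + y e_k] of the grid of [idx2 j k] (when [j = k], the
   vertex [x + y] of the 2-simplex in direction [j]) *)
Definition gsq j k x y : gob (idx2 j k) :=
  gpoint (idx2 j k) (fun l => x * ((l : nat) == j) + y * ((l : nat) == k)).

Lemma gsq_coord_le j k x y (l : 'I_N) : x <= 1 -> y <= 1 ->
  x * ((l : nat) == j) + y * ((l : nat) == k) <= idx2 j k l.
Proof. by move=> hx hy; apply: leq_add; case: (_ == _); rewrite ?muln0 ?muln1. Qed.

Lemma gsq_val j k x y l : x <= 1 -> y <= 1 ->
  (gsq j k x y l : nat) = x * ((l : nat) == j) + y * ((l : nat) == k).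
Proof. by move=> hx hy; rewrite gpoint_val // gsq_coord_le. Qed.

Lemma gstep_gsql j k y : y <= 1 -> gstep j (gsq j k 0 y) (gsq j k 1 y).
Proof.
move=> hy; apply: gstep_gpoint => [l|l|l /negbTE hl].
- by rewrite mul0n mul1n leq_addl.
- exact: gsq_coord_le.
- by rewrite hl.
Qed.

Lemma gstep_gsqr j k x : x <= 1 -> gstep k (gsq j k x 0) (gsq j k x 1).
Proof.
move=> hx; apply: gstep_gpoint => [l|l|l /negbTE hl].
- by rewrite mul0n mul1n addn0 leq_addr.
- exact: gsq_coord_le.
- by rewrite hl.
Qed.

(** * Staircases *)

(* the composite of the maps [S j] along the path from [a] towards [b] that
   raises the coordinates one at a time, in increasing order *)
Fixpoint staircase (C : prerelcat n) p (O : gob p -> ob C)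
  (S : nat -> gob p -> gob p -> mor C) (a b : gob p) (j : nat) : mor C :=
  if j is j'.+1 then
    Defs.comp (S j' (ginterp a b j') (ginterp a b j)) (staircase O S a b j')
  else idm (O a).

Lemma fm_staircase (D : prerelcat n) q (F : rfun (grid q) D) (a b : gob q) :
  gle a b -> fm F (garr a b) = staircase (fo F) (fun _ u v => fm F (garr u v)) a b N.
Proof.
move=> hab; rewrite -[in LHS](ginterpN a b).
elim: N => [|j IH] /=; first by rewrite ginterp0 garr_id fm_id.
by rewrite -IH -fm_garr_comp // ?gle_ginterpl //; apply: (ginterp_step _ hab).1.
Qed.

Lemma eq_staircase (D : prerelcat n) q (O1 O2 : gob q -> ob D) S1 S2 (a b : gob q) :
  O1 a = O2 a ->
  (forall j, S1 j (ginterp a b j) (ginterp a b j.+1) = S2 j (ginterp a b j) (ginterp a b j.+1)) ->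
  forall j, staircase O1 S1 a b j = staircase O2 S2 a b j.
Proof. by move=> hO hS; elim=> [|j IH] /=; rewrite ?hO // IH hS. Qed.

Lemma grid_rfeq_tdim1 (D : prerelcat n) q (F1 F2 : rfun (grid q) D) :
  (forall r (k : mmono n r q), tdim r <= 1 ->
     rfeq (rcomp F1 (gridfun k)) (rcomp F2 (gridfun k))) -> rfeq F1 F2.
Proof.
move=> H; have hO c : fo F1 c = fo F2 c.
  by rewrite -(gfo_seg_bot idx0 c c); apply: (H _ _ tdim_idx0).1.
split=> // m; have hm : gle (gdom m) (gcod m) := svalP m.
rewrite (garrE m) !fm_staircase //; apply: eq_staircase => // j.
rewrite (garr_step_seg (ginterp_step j hm)).
exact: (H _ _ (tdim_idx1 j)).2.
Qed.

Section Staircase.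
Variables (C : prerelcat n) (hC : is_cat C) (p : idx).
Variables (O : gob p -> ob C) (E : nat -> gob p -> gob p -> mor C).
Hypothesis E_dom : forall j u v, dom (E j u v) = O u.
Hypothesis E_cod : forall j u v, gstep j u v -> cod (E j u v) = O v.
Hypothesis E_id : forall j u, E j u u = idm (O u).
Hypothesis E_comp : forall j u v w, gstep j u v -> gstep j v w ->
  Defs.comp (E j v w) (E j u v) = E j u w.
Hypothesis E_square : forall j k u b c d, j != k ->
  gstep j u b -> gstep k u c -> gstep k b d -> gstep j c d ->
  Defs.comp (E k b d) (E j u b) = Defs.comp (E j c d) (E k u c).

Local Notation G := (staircase O E).

Lemma staircase_dom_cod a b j : gle a b ->
  dom (G a b j) = O a /\ cod (G a b j) = O (ginterp a b j).
Proof.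
have [cid [ccomp _]] := hC.
move=> hab; elim: j => [|j [IHd IHc]] /=; first by rewrite ginterp0; apply: cid.
have [-> ->] := ccomp _ _ (etrans IHc (esym (E_dom j _ (ginterp a b j.+1)))).
by rewrite IHd E_cod //; apply: ginterp_step.
Qed.

Lemma staircase_dom a b j : gle a b -> dom (G a b j) = O a.
Proof. by move=> hab; have [] := staircase_dom_cod j hab. Qed.

Lemma staircase_cod a b j : gle a b -> cod (G a b j) = O (ginterp a b j).
Proof. by move=> hab; have [] := staircase_dom_cod j hab. Qed.

Lemma staircase_id a j : G a a j = idm (O a).
Proof.
have [cid [_ [cunit _]]] := hC.
elim: j => [|j IH] //=; rewrite !ginterp_id IH E_id.
by have := (cunit (idm (O a))).1; rewrite (cid (O a)).1.
Qed.

(* Prepending a step in direction [k] to the staircase from [x'] gives the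
   staircase from [x]: the squares [E_square] carry the step past the steps in
   the lower coordinates, where [E_comp] merges it with the step in direction [k]. *)
Section StepFirst.
Variables (k : nat) (x x' c : gob p).
Hypotheses (sxx : gstep k x x') (hx'c : gle x' c).
Let hxc : gle x c := gle_trans sxx.1 hx'c.

Lemma staircase_commute j : j <= k ->
  Defs.comp (G x' c j) (E k x x') =
  Defs.comp (E k (ginterp x c j) (ginterp x' c j)) (G x c j).
Proof.
have [_ [_ [cunit cassoc]]] := hC.
elim: j => [_|j IH hj] /=.
  by rewrite !ginterp0 -{1}(E_cod sxx) -(E_dom k x x') (cunit _).1 (cunit _).2.
have s1 := ginterp_step j hxc; have s2 := ginterp_step j hx'c.
have s3 := ginterp_gstep c sxx (ltnW hj); have s4 := ginterp_gstep c sxx hj.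
rewrite -cassoc ?E_dom ?(E_cod sxx) ?staircase_dom ?staircase_cod //.
rewrite IH ?(ltnW hj) // cassoc ?E_dom ?(E_cod s3) ?staircase_cod //.
rewrite -(E_square (negbT (ltn_eqF hj)) s1 s3 s4 s2) -cassoc //.
  by rewrite staircase_cod // E_dom.
by rewrite (E_cod s1) E_dom.
Qed.

Lemma staircase_absorb j : k < j -> Defs.comp (G x' c j) (E k x x') = G x c j.
Proof.
have [_ [_ [_ cassoc]]] := hC.
elim: j => // j IH hj /=.
rewrite -cassoc ?E_dom ?(E_cod sxx) ?staircase_dom ?staircase_cod //.
case: (ltngtP k j) => [hkj|hjk|<-].
- by rewrite IH // !(ginterp_gstep_eq _ sxx) // ltnW.
- by rewrite ltnS leqNgt hjk in hj.
have s3 := ginterp_gstep c sxx (leqnn k).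
rewrite staircase_commute // cassoc ?E_dom ?(E_cod s3) ?staircase_cod //.
by rewrite (E_comp s3 (ginterp_step k hx'c)) (ginterp_gstep_eq _ sxx (ltnSn k)).
Qed.

End StepFirst.

Lemma staircase_comp a b c : gle a b -> gle b c ->
  Defs.comp (G b c N) (G a b N) = G a c N.
Proof.
have [_ [_ [cunit cassoc]]] := hC.
move=> hab hbc; have hac := gle_trans hab hbc.
suff H j : j <= N -> Defs.comp (G (ginterp a b j) c N) (G a b j) = G a c N.
  by rewrite -[in G b c N](ginterpN a b) H.
elim: j => [_|j IH hj]; rewrite [G a b _]/=.
  by rewrite ginterp0 -(staircase_dom N hac) (cunit _).1.
have s1 := ginterp_step j hab; have h1 := gle_trans (gle_ginterpr j.+1 hab) hbc.
rewrite cassoc ?E_dom ?(E_cod s1) ?staircase_dom ?staircase_cod //.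
by rewrite staircase_absorb // IH // ltnW.
Qed.

Lemma staircase_sub (P : mor C -> Prop) a b j : is_subcat P -> gle a b ->
  (forall i, P (E i (ginterp a b i) (ginterp a b i.+1))) -> P (G a b j).
Proof.
case=> P_id P_comp hab hE; elim: j => [|j IH] /=; first exact: P_id.
by apply: P_comp => //; rewrite staircase_cod // E_dom.
Qed.

End Staircase.

(** * Gluing a relative functor on a grid from its 2-dimensional restrictions *)

Section Glue.
Variables (C : prerelcat n) (hC : is_relcat C) (p : idx).
Variable Phi : forall r, mmono n r p -> tdim r <= 2 -> rfun (grid r) C.
Hypothesis Phi_nat : forall r r' (f : mmono n r p) (g : mmono n r' r) hr hr',
  rfeq (Phi (mm_comp f g) hr') (rcomp (Phi f hr) (gridfun g)).

Let tdim_idx0_2 : tdim idx0 <= 2 := leq_trans tdim_idx0 (isT : 1 <= 2).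
Let tdim_idx1_2 j : tdim (idx1 j) <= 2 := leq_trans (tdim_idx1 j) (isT : 1 <= 2).

Definition glue_ob (a : gob p) : ob C :=
  fo (Phi (mm_seg idx0 a a) tdim_idx0_2) (gbot idx0).

Definition glue_step j (u v : gob p) : mor C :=
  fm (Phi (mm_seg (idx1 j) u v) (tdim_idx1_2 j)) (gfull (idx1 j)).

Lemma glue_ob_fo r (f : mmono n r p) hr c : fo (Phi f hr) c = glue_ob (gfo f c).
Proof.
have := (Phi_nat f (mm_seg idx0 c c) hr tdim_idx0_2).1 (gbot idx0).
by rewrite mm_comp_seg ?gle_refl //= gfo_seg_bot => <-.
Qed.

Lemma glue_step_fm r (f : mmono n r p) hr j (a b : gob r) : gstep j a b ->
  fm (Phi f hr) (garr a b) = glue_step j (gfo f a) (gfo f b).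
Proof.
move=> st; rewrite (garr_step_seg st).
have := (Phi_nat f (mm_seg (idx1 j) a b) hr (tdim_idx1_2 j)).2 (gfull (idx1 j)).
by rewrite mm_comp_seg ?st.1 //= => <-.
Qed.

Lemma glue_step_comp_fm r (f : mmono n r p) hr j k (a b c : gob r) :
  gstep j a b -> gstep k b c -> fm (Phi f hr) (garr a c) =
  Defs.comp (glue_step k (gfo f b) (gfo f c)) (glue_step j (gfo f a) (gfo f b)).
Proof.
move=> sab sbc; rewrite (fm_garr_comp _ sab.1 sbc.1).
by rewrite (glue_step_fm f hr sab) (glue_step_fm f hr sbc).
Qed.

Lemma glue_step_id j u : glue_step j u u = idm (glue_ob u).
Proof.
have st : gstep j (gbot idx0) (gbot idx0) by split; first exact: gle_refl.
have := glue_step_fm (mm_seg idx0 u u) tdim_idx0_2 st.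
by rewrite gfo_seg_bot garr_id fm_id glue_ob_fo gfo_seg_bot => <-.
Qed.

Lemma glue_step_dom j u v : dom (glue_step j u v) = glue_ob u.
Proof. by rewrite /glue_step fm_dom glue_ob_fo gfo_seg_bot. Qed.

Lemma glue_step_cod j u v : gstep j u v -> cod (glue_step j u v) = glue_ob v.
Proof. by move=> st; rewrite /glue_step fm_cod glue_ob_fo gfo_seg_top. Qed.

Lemma glue_step_comp j u v w : gstep j u v -> gstep j v w ->
  Defs.comp (glue_step j v w) (glue_step j u v) = glue_step j u w.
Proof.
move=> suv svw; have /gleP huv := suv.1; have /gleP hvw := svw.1.
pose g l (x : nat) : 'I_(p l).+1 := if x == 0 then u l else if x == 1 then v l else w l.
have g_homo l x y : x <= y -> g l x <= g l y.
  rewrite /g; case: x => [|[|x]]; case: y => [|[|y]] //= _;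
  by rewrite ?huv ?hvw // (leq_trans (huv l)).
(* the 2-simplex [u -> v -> w] in direction [j] *)
pose f := MMono (fun l (x : 'I_(idx2 j j l).+1) => g l x) (fun l x y => g_homo l x y).
have [f00 f10 f11] :
    [/\ gfo f (gsq j j 0 0) = u, gfo f (gsq j j 1 0) = v & gfo f (gsq j j 1 1) = w].
  split; apply: gob_ext => l; rewrite /gfo /= gsq_val // /g;
  by case: (eqVneq (l : nat) j) => [_|ne] //=; rewrite ?(suv.2 l ne) ?(svw.2 l ne).
have [s1 s2] := (gstep_gsql j j (isT : 0 <= 1), gstep_gsqr j j (isT : 1 <= 1)).
have := glue_step_comp_fm f (tdim_idx2 j j) s1 s2.
by rewrite (glue_step_fm f _ (gstep_trans s1 s2)) f00 f10 f11.
Qed.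

Lemma glue_step_square j k u b c d : j != k ->
  gstep j u b -> gstep k u c -> gstep k b d -> gstep j c d ->
  Defs.comp (glue_step k b d) (glue_step j u b) =
  Defs.comp (glue_step j c d) (glue_step k u c).
Proof.
move=> hjk sub suc sbd scd; have /gleP hud := gle_trans sub.1 sbd.1.
pose f := mm_seg (idx2 j k) u d.
have fQ x y l : x <= 1 -> y <= 1 -> gfo f (gsq j k x y) l =
    if x * ((l : nat) == j) + y * ((l : nat) == k) == 0 then u l else d l.
  by move=> hx hy; rewrite /gfo /= /seg_fun gsq_val //; case: eqP; rewrite ?hud.
have f00 : gfo f (gsq j k 0 0) = u by apply: gob_ext => l; rewrite fQ.
have f10 : gfo f (gsq j k 1 0) = b.
  apply: gob_ext => l; rewrite fQ // mul1n mul0n addn0.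
  case: (eqVneq (l : nat) j) => [lj|ne] /=; last by rewrite (sub.2 l ne).
  by rewrite (sbd.2 l) // lj.
have f01 : gfo f (gsq j k 0 1) = c.
  apply: gob_ext => l; rewrite fQ // mul1n mul0n add0n.
  case: (eqVneq (l : nat) k) => [lk|ne] /=; last by rewrite (suc.2 l ne).
  by rewrite (scd.2 l) // lk eq_sym.
have f11 : gfo f (gsq j k 1 1) = d.
  apply: gob_ext => l; rewrite fQ // !mul1n.
  case: (eqVneq (l : nat) j) => [//|nj]; case: (eqVneq (l : nat) k) => [//|nk] /=.
  by rewrite (sub.2 l nj) (sbd.2 l nk).
have := glue_step_comp_fm f (tdim_idx2 j k) (gstep_gsql j k (isT : 0 <= 1)) (gstep_gsqr j k (isT : 1 <= 1)).
rewrite (glue_step_comp_fm f _ (gstep_gsqr j k (isT : 0 <= 1)) (gstep_gsql j k (isT : 1 <= 1))).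
by rewrite f00 f10 f01 f11.
Qed.

Let hcat : is_cat C := hC.1.

Local Notation G := (staircase glue_ob glue_step).

Definition glue_fm (m : gmor p) : mor C := G (gdom m) (gcod m) N.

Lemma glue_fm_dom m : dom (glue_fm m) = glue_ob (gdom m).
Proof. exact: (staircase_dom hcat glue_step_dom glue_step_cod N (svalP m)). Qed.

Lemma glue_fm_cod m : cod (glue_fm m) = glue_ob (gcod m).
Proof.
by rewrite /glue_fm (staircase_cod hcat glue_step_dom glue_step_cod N (svalP m)) ginterpN.
Qed.

Lemma glue_fm_id a : glue_fm (gid a) = idm (glue_ob a).
Proof. exact: (staircase_id hcat glue_step_id a N). Qed.

Lemma glue_fm_comp (f g : gmor p) : gcod f = gdom g ->
  glue_fm (gcomp g f) = Defs.comp (glue_fm g) (glue_fm f).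
Proof.
rewrite /glue_fm => e; have [hf hg] := (svalP f, svalP g).
have [-> ->] : gdom (gcomp g f) = gdom f /\ gcod (gcomp g f) = gcod g.
  by rewrite /gdom /gcod gcomp_val.
rewrite e (staircase_comp hcat glue_step_dom glue_step_cod glue_step_comp) //.
  exact: glue_step_square.
by rewrite -e.
Qed.

Lemma glue_step_w u v : rw (glue_step 0 u v).
Proof.
by apply: fm_w => k hk /=; rewrite /idx1; case: eqP => // e; case/eqP: hk; apply: val_inj.
Qed.

Lemma glue_step_v i u v : rv i (glue_step i.+1 u v).
Proof.
apply: fm_v => k _ hk /=; rewrite /idx1.
by case: eqP => // e; case/eqP: hk; apply: val_inj; rewrite /= e.
Qed.

Lemma glue_fm_v i m : gv i m -> rv i (glue_fm m).
Proof.
have [_ [hv [_ [hwv _]]]] := hC.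
move=> hm; apply: (staircase_sub hcat glue_step_dom glue_step_cod _ (hv i) (svalP m)) => j.
case: (eqVneq j 0) => [->|j0]; first exact/hwv/glue_step_w.
case: (eqVneq j i.+1) => [->|ji]; first exact: glue_step_v.
rewrite ginterpS_eq ?glue_step_id; first exact: (hv i).1.
move=> l lj; apply: hm; apply/eqP => e; subst j; first by rewrite e in j0.
by move/eqP: ji; rewrite e lift0.
Qed.

Lemma glue_fm_w m : gw m -> rw (glue_fm m).
Proof.
have [_ [_ [hw _]]] := hC.
move=> hm; apply: (staircase_sub hcat glue_step_dom glue_step_cod _ hw (svalP m)) => j.
case: (eqVneq j 0) => [->|j0]; first exact: glue_step_w.
rewrite ginterpS_eq ?glue_step_id; first exact: hw.1.
by move=> l lj; apply: hm; apply/eqP => e; subst j; rewrite e in j0.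
Qed.

Definition glue : rfun (grid p) C :=
  @RFun n (grid p) C glue_ob glue_fm glue_fm_dom glue_fm_cod glue_fm_id glue_fm_comp glue_fm_v glue_fm_w.

Lemma glue_restrict r (f : mmono n r p) hr : rfeq (rcomp glue (gridfun f)) (Phi f hr).
Proof.
split=> [c|m]; first by rewrite /= glue_ob_fo.
have hm : gle (gdom m) (gcod m) := svalP m.
change (G (gfo f (gdom m)) (gfo f (gcod m)) N = fm (Phi f hr) m).
rewrite [in RHS](garrE m) fm_staircase //.
elim: N => [|j IH] /=; first by rewrite glue_ob_fo.
by rewrite IH (glue_step_fm f hr (ginterp_step j hm)) !gfo_ginterp.
Qed.

End Glue.

(** * Extension from the 2-skeleton *)

Section Extension.
Variables (X : pmss n) (hX : is_mss X) (C : prerelcat n) (hC : is_relcat C).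
Variables (T : spred (nerve C)) (h : smap (sk2 X) T).

Lemma sk2_tdim r (x : X r) : tdim r <= 2 -> sk2 X r x.
Proof. by move=> hr; exists r, (mm_id r), x; rewrite hX.1. Qed.

Lemma sfun_congr p (x1 x2 : X p) (hx1 : sk2 X p x1) (hx2 : sk2 X p x2) :
  x1 = x2 -> sfun h hx1 = sfun h hx2.
Proof. by move=> e; subst x2; rewrite (proof_irrelevance _ hx1 hx2). Qed.

Definition sk2_probe p (y : X p) r (f : mmono n r p) (hr : tdim r <= 2) : rfun (grid r) C :=
  sfun h (sk2_tdim (act f y) hr).

Lemma sk2_probe_nat p (y : X p) r r' (f : mmono n r p) (g : mmono n r' r) hr hr' :
  rfeq (sk2_probe y (mm_comp f g) hr') (rcomp (sk2_probe y f hr) (gridfun g)).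
Proof.
rewrite /sk2_probe (sfun_congr _ (sk2_tdim (act g (act f y)) hr') (hX.2 _ _ _ f g y)).
by rewrite (sfun_nat h (sk2_tdim (act f y) hr)).
Qed.

Definition sk2_extf p (y : X p) : rfun (grid p) C := glue hC (@sk2_probe_nat p y).

Lemma sk2_extf_restrict p (y : X p) r (f : mmono n r p) hr :
  rfeq (rcomp (sk2_extf y) (gridfun f)) (sk2_probe y f hr).
Proof. exact: glue_restrict. Qed.

Lemma sk2_extf_nat p q (f : mmono n q p) (y : X p) :
  sk2_extf (act f y) = rcomp (sk2_extf y) (gridfun f).
Proof.
apply: rfeq_eq; apply: grid_rfeq_tdim1 => r k /leq_trans /(_ (isT : 1 <= 2)) hr.
apply: rfeq_trans (sk2_extf_restrict _ k hr) _.
rewrite /sk2_probe (sfun_congr _ (sk2_tdim (act (mm_comp f k) y) hr) (esym (hX.2 _ _ _ f k y))).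
apply: rfeq_sym; apply: rfeq_trans _ (sk2_extf_restrict _ (mm_comp f k) hr).
by rewrite -rcomp_gridfun.
Qed.

Definition sk2_ext : smap (allp X) (allp (nerve C)) :=
  @SMap n X (allp X) (nerve C) (allp (nerve C)) (fun p y _ => sk2_extf y)
    (fun _ _ _ => I) (fun p q f y _ _ => sk2_extf_nat f y).

Lemma sk2_extf_sk2 p (y : X p) (hy : sk2 X p y) : sk2_extf y = sfun h hy.
Proof.
apply: rfeq_eq; apply: grid_rfeq_tdim1 => r k /leq_trans /(_ (isT : 1 <= 2)) hr.
by apply: rfeq_trans (sk2_extf_restrict _ k hr) _; rewrite /sk2_probe (sfun_nat h hy).
Qed.

Lemma sk2_ext_factors (D : prerelcat n) (F : rfun C D) (g : smap (allp X) (allp (nerve D))) :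
  (forall p x (hx : sk2 X p x), rfeq (rcomp F (sfun h hx)) (sfun g (I : allp X p x))) ->
  factors F sk2_ext g.
Proof.
move=> hFg p x hx; apply: grid_rfeq_tdim1 => r k /leq_trans /(_ (isT : 1 <= 2)) hr.
apply: rfeq_trans (rfeq_compl F (sk2_extf_restrict _ k hr)) _.
by apply: rfeq_trans (hFg _ _ _) _; rewrite (sfun_nat g hx).
Qed.

End Extension.

End Skeleton.

Lemma restrK n (Y : pmss n) (hY : is_mss Y) (C : prerelcat n) (hC : is_relcat C) :
  cancel (@restr n Y (nerve C)) (sk2_ext hY hC (T := sk2 (nerve C))).
Proof.
move=> g; apply: smap_ext => p y hy; apply: rfeq_eq.
by apply: (sk2_ext_factors hY hC (F := rid C)) => q x hx; split.
Qed.

Lemma sk2_extK n (Y : pmss n) (hY : is_mss Y) (C : prerelcat n) (hC : is_relcat C) :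
  cancel (sk2_ext hY hC (T := sk2 (nerve C))) (@restr n Y (nerve C)).
Proof. by move=> h; apply: smap_ext => p y hy; apply: sk2_extf_sk2. Qed.

Lemma restr_bij n (C : prerelcat n) (hC : is_relcat C) (Y : pmss n) (hY : is_mss Y) :
  bijective (@restr n Y (nerve C)).
Proof. by exists (sk2_ext hY hC (T := sk2 (nerve C))); [apply: restrK | apply: sk2_extK]. Qed.

Lemma universal_sk2_iso n (X : pmss n) (hX : is_mss X)
  (KX : prerelcat n) (eta : smap (allp X) (allp (nerve KX))) (hKX : is_relcat KX)
  (KS : prerelcat n) (eta' : smap (sk2 X) (allp (nerve KS))) (hKS : is_relcat KS) :
  universal eta -> universal eta' ->
  forall phi : rfun KS KX, factors phi eta' (restr_dom eta) -> is_iso phi.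
Proof.
move=> ueta ueta' phi hphi.
have [[psi hpsi] _] := ueta KS hKS (sk2_ext hX hKS eta').
exists psi; split.
- apply: (ueta' KS hKS eta').2 => [p x hx|p x hx]; last by split.
  apply: rfeq_trans (rfeq_compl psi (hphi p x hx)) _.
  by apply: rfeq_trans (hpsi p x I) _; rewrite /= (sk2_extf_sk2 _ _ _ hx).
- apply: (ueta KX hKX eta).2 => [p x hx|p x hx]; last by split.
  apply: rfeq_trans (rfeq_compl phi (hpsi p x hx)) _.
  exact: sk2_ext_factors.
Qed.

Theorem mainTheorem3 (n : nat) (hn : 1 <= n) :
  (forall X : pmss n, is_mss X ->
   forall (KX : prerelcat n) (eta : smap (allp X) (allp (nerve KX))),
     is_relcat KX -> universal eta ->
   forall (KS : prerelcat n) (eta' : smap (sk2 X) (allp (nerve KS))),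
     is_relcat KS -> universal eta' ->
   forall phi : rfun KS KX, factors phi eta' (restr_dom eta) ->
     is_iso phi) /\
  (forall C : prerelcat n, is_relcat C ->
   forall Y : pmss n, is_mss Y ->
     bijective (@restr n Y (nerve C))).
Proof.
split=> [X hX KX eta hKX ueta KS eta' hKS ueta'|C hC Y hY].
  exact: universal_sk2_iso.
exact: restr_bij.
Qed.
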